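(* Let $m\ge1$ and let $\widehat K_m$ be the finite cover of $K_{m,m}$ described below, viewed as a square subcomplex of the $2$–skeleton of $\mathcal T_{2m+1}$. Then (a) hyperplanes of $\widehat K_m$ do not self-intersect; (b) hyperplanes of $\widehat K_m$ do not self-osculate; (c) hyperplanes of $\widehat K_m$ are two-sided.
   Context: $G_{m,m}=\langle a_1,\dots,a_{2m+1}\mid [a_i,a_{i+1}]=1\ (1\le i\le m),\ a_{m+j+1}^{-1}a_ja_{m+j+1}=a_{m+j}\ (1\le j\le m)\rangle$ and $K_{m,m}$ is its presentation square complex. Let $H_n=\{0,1\}^n\subset H_{n+1}$ (append $0$), $H_n^*\subset H_{n+1}$ the tuples with last coordinate $1$, $\beta_i$ the flip of coordinate $i$, $\varphi_{k,m+k}$ the swap of coordinates $k$ and $m+k$. The right action $\pi$ of $G_{m,m}$ on $H_{2m+1}$ is defined by: $\pi(a_i)=\beta_i$ on $H_{m+1}$ ($i\le m+1$); for $k=1,\dots,m$, $\pi(a_{m+k+1})=\beta_{m+k+1}$ on $H_{m+k+1}$, and $\pi(a_j)|_{H^*_{m+k}}=\beta_{m+k+1}\circ\varphi_{k,m+k}\circ\pi(a_j)|_{H_{m+k}}\circ\varphi_{k,m+k}\circ\beta_{m+k+1}$ for $j\le m+k$. $\widehat K_m$ is the covering of $K_{m,m}$ corresponding to the stabilizer of $(0,\dots,0)$; its vertices are identified with $H_{2m+1}$, and it embeds cellularly into the $2$–skeleton of the torus $\mathcal T_{2m+1}=(\mathbb R/2\mathbb Z)^{2m+1}$ (product CW structure,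 each factor having $0$–cells $0,1$ and $1$–cells $[0,1],[1,2]$). A hyperplane of a square complex is a component of the complex formed by midcubes (midlines of squares and midpoints of edges). It self-intersects if it contains both midlines of some square; it self-osculates if two distinct dual edges share a vertex without lying in a common square; it is two-sided if there is a combinatorial map $H\times[0,1]\to X$ restricting to the identity on $H\times\{1/2\}$. *)

From mathcomp Require Import all_boot.
Set Implicit Arguments. Unset Strict Implicit. Unset Printing Implicit Defensive.

(*  A square complex has finitely many vertices, oriented edges (each 1-cell  *)
(*  carries a fixed reference orientation esrc -> etgt) and squares.  A       *)
(*  square s has corners c_0,c_1,c_2,c_3 (cyclically); its side k (k : 'I_4)  *)
(*  is the edge [side s k], running from c_k to c_(k+1 mod 4); [sfwd s k] is  *)
(*  true iff the reference orientation of that edge goes from c_k to          *)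
(*  c_(k+1).  Sides k and k+2 are opposite; the square has two midlines,      *)
(*  joining the midpoints of sides 0,2 and of sides 1,3.                      *)
Record sqcx := SqCx {
  vtx : finType; edg : finType; sqr : finType;
  esrc : edg -> vtx; etgt : edg -> vtx;
  side : sqr -> 'I_4 -> edg;
  sfwd : sqr -> 'I_4 -> bool }.

Definition opp4 (k : 'I_4) : 'I_4 := inord ((k + 2) %% 4).

Section Hyperplanes.
Variable X : sqcx.

(* Two edge midpoints are joined by a midline of a square iff they are the
   midpoints of opposite sides of that square. *)
Definition hadj : rel (edg X) :=
  fun e e' => [exists s : sqr X, exists k : 'I_4,
                 (side s k == e) && (side s (opp4 k) == e')].

(* e and e' are dual to the same hyperplane (the hyperplane, a connected
   component of the midcube complex, is determined by any dual edge; the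
   midline of s through side k lies in the hyperplane dual to side s k). *)
Definition same_hyp (e e' : edg X) : bool := connect hadj e e'.

(* The hyperplane H dual to e0 self-intersects: it contains both midlines of
   some square. *)
Definition self_intersects (e0 : edg X) : Prop :=
  exists s : sqr X, same_hyp e0 (side s (inord 0)) /\ same_hyp e0 (side s (inord 1)).

Definition share_vertex (e1 e2 : edg X) : bool :=
  [|| esrc e1 == esrc e2, esrc e1 == etgt e2, etgt e1 == esrc e2 | etgt e1 == etgt e2].

Definition in_common_square (e1 e2 : edg X) : Prop :=
  exists s : sqr X, (exists k, side s k = e1) /\ (exists k', side s k' = e2).

Definition self_osculates (e0 : edg X) : Prop :=
  exists e1 e2 : edg X, [/\ same_hyp e0 e1, same_hyp e0 e2, e1 != e2,
                            share_vertex e1 e2 & ~ in_common_square e1 e2].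

(* The hyperplane H dual to e0 is two-sided: there is a combinatorial map
   H x [0,1] -> X restricting to the identity on H x {1/2}.  Such a map sends
   each vertical edge e x [0,1] (e a dual edge) onto the edge e, which is
   recorded by o e (o e = true : (e,0) |-> esrc e, (e,1) |-> etgt e; false:
   the reverse), and each square mu x [0,1] (mu the midline of s joining
   sides k and k+2) onto s, with e x [0,1] |-> side k, w x [0,1] |-> side k+2
   and the horizontal edges (mu,t) onto the two remaining sides of s.  The
   latter is possible iff (e,0) sits at corner c_k exactly when (w,0) sits
   at corner c_(k+3), i.e. iff the condition below holds. *)
Definition two_sided (e0 : edg X) : Prop :=
  exists o : edg X -> bool, forall (s : sqr X) (k : 'I_4),
    same_hyp e0 (side s k) ->
    (o (side s k) == sfwd s k) = (o (side s (opp4 k)) != sfwd s (opp4 k)).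

End Hyperplanes.

(*  A point x of H_{2m+1} is x : {ffun 'I_(2m+1) -> bool}; paper coordinate   *)
(*  i (1 <= i <= 2m+1) is stored at ordinal i-1.  H_l is the set of points    *)
(*  whose coordinates > l vanish.                                             *)
Section Action.
Variable m : nat.
Local Notation n := (2 * m).+1.
Definition Hpt := {ffun 'I_n -> bool}.

Definition coord (x : Hpt) (i : nat) : bool := x (inord i.-1).
Definition flipc (i : nat) (x : Hpt) : Hpt :=
  [ffun t : 'I_n => if t.+1 == i then ~~ x t else x t].
Definition swapc (i j : nat) (x : Hpt) : Hpt :=
  [ffun t : 'I_n => if t.+1 == i then coord x j
                    else if t.+1 == j then coord x i else x t].

(* actk k j : pi(a_j) restricted to H_{m+k+1} (extended by the identity on
   the coordinates > m+k+1).  Level m+1: pi(a_j) = beta_j.  Level m+k+1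
   (k >= 1): pi(a_{m+k+1}) = beta_{m+k+1}; for j <= m+k, pi(a_j) agrees with
   the previous level on H_{m+k} (coordinate m+k+1 equal to 0) and equals
   beta_{m+k+1} o phi_{k,m+k} o pi(a_j)|_{H_{m+k}} o phi_{k,m+k} o beta_{m+k+1}
   on H^*_{m+k} (coordinate m+k+1 equal to 1). *)
Fixpoint actk (k j : nat) (x : Hpt) : Hpt :=
  match k with
  | 0 => flipc j x
  | k'.+1 =>
      let c := m + k'.+2 in
      if j == c then flipc c x
      else if coord x c then
        flipc c (swapc k'.+1 (m + k'.+1)
                   (actk k' j (swapc k'.+1 (m + k'.+1) (flipc c x))))
      else actk k' j x
  end.

(* generator a_j (paper index 1 <= j <= 2m+1) as an ordinal *)
Definition gen (j : nat) : 'I_n := inord j.-1.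

(* the right action of the generator with ordinal g (i.e. a_{g+1}) *)
Definition pi (g : 'I_n) (x : Hpt) : Hpt := actk m g.+1 x.

(* The covering complex \hat K_m of K_{m,m} (stabilizer of (0,...,0)), with   *)
(* vertex set H_{2m+1}.  Edge (x,g): the lift at x of the loop a_{g+1}, from  *)
(* x to x.a_{g+1}.  Square (x,false,r): the lift at x of the relator          *)
(* [a_i,a_{i+1}], i = r+1, read as a_i a_{i+1} a_i^-1 a_{i+1}^-1.  Square      *)
(* (x,true,r): the lift at x of the relator of a_{m+j+1}^-1 a_j a_{m+j+1} =   *)
(* a_{m+j}, j = r+1, read cyclically as a_j a_{m+j+1} a_{m+j}^-1 a_{m+j+1}^-1.*)
Definition Kedge := (Hpt * 'I_n)%type.
Definition Ksq := (Hpt * bool * 'I_m)%type.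

Definition Ksrc (e : Kedge) : Hpt := e.1.
Definition Ktgt (e : Kedge) : Hpt := pi e.2 e.1.

(* the two generators read positively along the first two sides, and the
   fourth one: square x -a-> x.a -b-> x.a.b = x.b.d <-d- x.b <-b- x *)
Definition Kletters (t : bool) (r : 'I_m) : 'I_n * 'I_n * 'I_n :=
  if t then (gen r.+1, gen (m + r.+2), gen (m + r.+1))
  else (gen r.+1, gen r.+2, gen r.+1).

Definition Kside (s : Ksq) (k : 'I_4) : Kedge :=
  let: (x, t, r) := s in
  let: (a, b, d) := Kletters t r in
  match val k with
  | 0 => (x, a)
  | 1 => (pi a x, b)
  | 2 => (pi b x, d)
  | _ => (x, b)
  end.

Definition Kfwd (s : Ksq) (k : 'I_4) : bool := val k < 2.

Definition Khat : sqcx := @SqCx Hpt Kedge Ksq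
  Ksrc Ktgt Kside Kfwd.

End Action.

From Pilot Require Import Defs.
From mathcomp Require Import all_boot zify.
Set Implicit Arguments. Unset Strict Implicit. Unset Printing Implicit Defensive.

(* Every generator acts on H_{2m+1} by flipping a single coordinate, the
   "direction" of the corresponding edge, so each edge of \hat K_m is an edge
   of the cube {0,1}^{2m+1}.  Labelling an edge by its direction and by the
   value of that coordinate at its source, one shows by induction on the
   levels of the definition of pi that the directions at a vertex are pairwise
   distinct and that every relator square has sides in two distinct
   directions, opposite sides sharing their label.  The label is then constant
   on hyperplanes, and each of the three properties follows: the two midlines
   of a square carry different labels; two distinct edges at a common vertex
   carry different labels; and the coordinate value at the source of an edge
   is a consistent choice of side. *)

Section HyperplaneLabels.
Variables (X : sqcx) (L : eqType) (f : edg X -> L).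
Hypothesis f_hadj : forall e e', hadj e e' -> f e = f e'.

Lemma same_hyp_label e e' : same_hyp e e' -> f e = f e'.
Proof.
move=> /connectP [p]; elim: p e => [|e1 p IH] e /=; first by move=> _ ->.
by move=> /andP [/f_hadj -> /IH].
Qed.

Lemma not_self_intersects_of_label e :
  (forall s : sqr X, f (side s (inord 0)) != f (side s (inord 1))) ->
  ~ self_intersects (X := X) e.
Proof.
move=> f_sq [s [/same_hyp_label f0 /same_hyp_label f1]].
by move: (f_sq s); rewrite -f0 -f1 eqxx.
Qed.

Lemma not_self_osculates_of_label e :
  (forall e1 e2, share_vertex e1 e2 -> f e1 = f e2 -> e1 = e2) ->
  ~ self_osculates (X := X) e.
Proof.
move=> f_loc [e1 [e2 [/same_hyp_label f1 /same_hyp_label f2 /eqP ne12 sv _]]].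
by apply: ne12; apply: f_loc; rewrite // -f1 -f2.
Qed.

End HyperplaneLabels.

Lemma two_sided_of_invariant (X : sqcx) (o : edg X -> bool) (e : edg X) :
  (forall (s : sqr X) k, sfwd s (opp4 k) = ~~ sfwd s k) ->
  (forall e1 e2, hadj (X := X) e1 e2 -> o e1 = o e2) ->
  two_sided (X := X) e.
Proof.
move=> fwd_opp o_hadj; exists o => s k _.
have -> : o (side s (opp4 k)) = o (side s k).
  symmetry; apply: o_hadj.
  by apply/existsP; exists s; apply/existsP; exists k; rewrite !eqxx.
by rewrite fwd_opp; case: (o _); case: (sfwd s k).
Qed.

Definition transp (a b i : nat) : nat :=
  if i == a then b else if i == b then a else i.

Lemma transp_range a b i N :
  1 <= a <= N -> 1 <= b <= N -> 1 <= i <= N -> 1 <= transp a b i <= N.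
Proof. by rewrite /transp; case: ifP => //; case: ifP. Qed.

Lemma transpL a b : transp a b a = b.
Proof. by rewrite /transp eqxx. Qed.

Lemma transpR a b : transp a b b = a.
Proof. by rewrite /transp eqxx; case: eqP. Qed.

Lemma transpK a b : involutive (transp a b).
Proof.
move=> i; rewrite /transp.
case: (eqVneq i a) => [->|]; first by case: (eqVneq b a) => [->|]; rewrite ?eqxx.
case: (eqVneq i b) => [->|]; first by rewrite eqxx.
by move=> /negPf -> /negPf ->.
Qed.

Lemma transp_inj a b : injective (transp a b).
Proof. exact: inv_inj (@transpK a b). Qed.

Section Directions.
Variable m : nat.
Local Notation n := (2 * m).+1.

Lemma coordE (x : Hpt m) (t : 'I_n) : x t = coord x t.+1.
Proof. by rewrite /coord /=; congr (x _); apply/val_inj; rewrite /= inordK. Qed.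

Lemma Hpt_coord_ext (x y : Hpt m) :
  (forall i, 1 <= i <= n -> coord x i = coord y i) -> x = y.
Proof.
by move=> xy; apply/ffunP => t; rewrite !coordE; apply: xy; have := ltn_ord t; lia.
Qed.

Lemma coord_flipc (x : Hpt m) d i : 1 <= i <= n ->
  coord (flipc d x) i = if i == d then ~~ coord x i else coord x i.
Proof.
by move=> i_n; rewrite /coord ffunE inordK; [have -> : i.-1.+1 = i by lia | lia].
Qed.

Lemma coord_flipc_neq (x : Hpt m) d i : 1 <= i <= n -> i != d ->
  coord (flipc d x) i = coord x i.
Proof. by move=> i_n /negPf id; rewrite coord_flipc // id. Qed.

Lemma coord_swapc (x : Hpt m) a b i : 1 <= i <= n ->
  coord (swapc a b x) i = coord x (transp a b i).
Proof.
move=> i_n; rewrite {1}/coord ffunE inordK; last lia.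
have -> : i.-1.+1 = i by lia.
by rewrite /transp; case: ifP => //; case: ifP.
Qed.

Lemma flipcC d d' (x : Hpt m) : flipc d (flipc d' x) = flipc d' (flipc d x).
Proof. by apply/ffunP => t; rewrite !ffunE; case: (t.+1 == d); case: (t.+1 == d'). Qed.

Lemma flipcK d : involutive (@flipc m d).
Proof.
by move=> x; apply/ffunP => t; rewrite !ffunE; case: (t.+1 == d) => //; apply: negbK.
Qed.

Lemma swapcK a b : 1 <= a <= n -> 1 <= b <= n -> involutive (@swapc m a b).
Proof.
move=> a_n b_n x; apply: Hpt_coord_ext => i i_n.
by rewrite !coord_swapc ?transpK //; apply: transp_range.
Qed.

Lemma swapc_flipc a b d (x : Hpt m) : 1 <= a <= n -> 1 <= b <= n ->
  swapc a b (flipc d x) = flipc (transp a b d) (swapc a b x).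
Proof.
move=> a_n b_n; apply: Hpt_coord_ext => i i_n.
rewrite coord_swapc // coord_flipc; last exact: transp_range.
rewrite coord_flipc // coord_swapc //.
by have -> : (transp a b i == d) = (i == transp a b d) by
  apply/eqP/eqP => [<-|->]; rewrite transpK.
Qed.

Definition twist k (x : Hpt m) : Hpt m := swapc k.+1 (m + k.+1) (flipc (m + k.+2) x).

(* [dir k j x] is the coordinate flipped by [actk k j] at [x]; it follows the
   recursion of [actk], with the swap phi_{k,m+k} acting on indices. *)
Fixpoint dir (k j : nat) (x : Hpt m) : nat :=
  match k with
  | 0 => j
  | k'.+1 =>
      let c := m + k'.+2 in
      if j == c then c
      else if coord x c then transp k'.+1 (m + k'.+1) (dir k' j (twist k' x))
      else dir k' j x
  end.

Lemma dirS_on k j x : j != m + k.+2 -> coord x (m + k.+2) ->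
  dir k.+1 j x = transp k.+1 (m + k.+1) (dir k j (twist k x)).
Proof. by move=> /negPf jc xc /=; rewrite jc xc. Qed.

Lemma dirS_off k j x : j != m + k.+2 -> coord x (m + k.+2) = false ->
  dir k.+1 j x = dir k j x.
Proof. by move=> /negPf jc xc /=; rewrite jc xc. Qed.

Lemma dir_top k x : dir k (m + k.+1) x = m + k.+1.
Proof. by case: k => [|k] //=; rewrite eqxx. Qed.

Lemma dir_low k j x : k < j <= m -> dir k j x = j.
Proof.
elim: k x => [|k IH] x j_k //=.
have -> : (j == m + k.+2) = false by apply/eqP; lia.
case: (coord x _); rewrite IH; try lia.
rewrite /transp; have -> : (j == k.+1) = false by apply/eqP; lia.
by have -> : (j == m + k.+1) = false by apply/eqP; lia.
Qed.

Lemma dir_range k j x : k <= m -> 1 <= j <= m + k.+1 -> 1 <= dir k j x <= m + k.+1.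
Proof.
elim: k j x => [|k IH] j x /= k_m j_k; first lia.
case: (eqVneq j (m + k.+2)) => [_|jc] /=; first lia.
have j_k' : 1 <= j <= m + k.+1 by lia.
case: (coord x _); last by have := IH j x (ltnW k_m) j_k'; lia.
apply: transp_range; [lia|lia|].
by have := IH j (twist k x) (ltnW k_m) j_k'; lia.
Qed.

Lemma dirS_range k j x : k < m -> 1 <= j <= m + k.+1 ->
  1 <= dir k.+1 j x <= m + k.+1.
Proof.
move=> k_m j_k; have jc : j != m + k.+2 by apply/eqP; lia.
case xc: (coord x (m + k.+2)); last by rewrite dirS_off //; apply: dir_range; lia.
by rewrite dirS_on //; apply: transp_range; [lia|lia|apply: dir_range; lia].
Qed.

Lemma actk_dir k j x : k <= m -> 1 <= j <= m + k.+1 -> actk k j x = flipc (dir k j x) x.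
Proof.
elim: k j x => [|k IH] j x /= k_m j_k; first done.
case: (eqVneq j (m + k.+2)) => [_|jc] //=.
case: (coord x _); last by apply: IH; lia.
rewrite IH; [|lia|lia].
by rewrite swapc_flipc ?swapcK 1?flipcC ?flipcK //; lia.
Qed.

Lemma twist_flipc k d x : k < m ->
  twist k (flipc (transp k.+1 (m + k.+1) d) x) = flipc d (twist k x).
Proof. by move=> k_m; rewrite /twist flipcC swapc_flipc ?transpK //; lia. Qed.

Lemma dir_inj k x j j' : k <= m ->
  1 <= j <= m + k.+1 -> 1 <= j' <= m + k.+1 -> dir k j x = dir k j' x -> j = j'.
Proof.
elim: k x j j' => [|k IH] x j j' k_m //.
wlog: j j' / j' != m + k.+2.
  move=> hyp j_k j'_k E.
  case: (eqVneq j' (m + k.+2)) => [j'c|j'c]; last exact: hyp j'c j_k j'_k E.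
  case: (eqVneq j (m + k.+2)) => [-> //|jc].
  by symmetry; apply: hyp; rewrite // E.
move=> j'c j_k j'_k.
case: (eqVneq j (m + k.+2)) => [->|jc].
  by rewrite dir_top; have := dirS_range x k_m (j := j'); lia.
case xc: (coord x (m + k.+2)).
- by rewrite !dirS_on // => /transp_inj; apply: IH; lia.
- by rewrite !dirS_off //; apply: IH; lia.
Qed.

(* The lift at [x] of a relator a b d^-1 b^-1 closes up in the cube: its sides
   point alternately in two distinct directions. *)
Definition square_dirs k a b d x := [&& dir k a x != dir k b x,
   dir k b (flipc (dir k a x) x) == dir k b x &
   dir k d (flipc (dir k b x) x) == dir k a x].

Lemma square_dirsS k a b d x : k < m ->
  1 <= a <= m + k.+1 -> 1 <= b <= m + k.+1 -> 1 <= d <= m + k.+1 ->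
  (forall y, square_dirs k a b d y) -> square_dirs k.+1 a b d x.
Proof.
move=> k_m a_k b_k d_k sq.
have ac : a != m + k.+2 by apply/eqP; lia.
have bc : b != m + k.+2 by apply/eqP; lia.
have dc : d != m + k.+2 by apply/eqP; lia.
case xc: (coord x (m + k.+2)).
- move/and3P: (sq (twist k x)) => [AB /eqP sqB /eqP sqD].
  have flip_on : forall i, 1 <= i <= m + k.+1 ->
      coord (flipc (transp k.+1 (m + k.+1) i) x) (m + k.+2).
    move=> i i_k; rewrite coord_flipc_neq ?xc //; first lia.
    by apply/eqP => E; have := @transp_range k.+1 (m + k.+1) i (m + k.+1); lia.
  rewrite /square_dirs !(dirS_on _ xc) //.
  rewrite !(dirS_on _ (flip_on _ (dir_range _ (ltnW k_m) _))) //.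
  by rewrite !twist_flipc // sqB sqD !eqxx (inj_eq (@transp_inj _ _)) AB.
- move/and3P: (sq x) => [AB /eqP sqB /eqP sqD].
  have flip_off : forall i, 1 <= i <= m + k.+1 ->
      coord (flipc i x) (m + k.+2) = false.
    by move=> i i_k; rewrite coord_flipc_neq ?xc //; [lia | apply/eqP; lia].
  rewrite /square_dirs !(dirS_off _ xc) //.
  rewrite !(dirS_off _ (flip_off _ (dir_range _ (ltnW k_m) _))) //.
  by rewrite AB sqB sqD !eqxx.
Qed.

Lemma comm_square_dirs k i x : k <= m -> 1 <= i <= m -> square_dirs k i i.+1 i x.
Proof.
elim: k x => [|k IH] x k_m i_m.
  by rewrite /square_dirs /= !eqxx andbT; apply/eqP; lia.
by apply: square_dirsS; try lia; move=> y; apply: IH; lia.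
Qed.

Lemma conj_square_dirs_top k x : k < m ->
  square_dirs k.+1 k.+1 (m + k.+2) (m + k.+1) x.
Proof.
move=> k_m.
have kc : k.+1 != m + k.+2 by apply/eqP; lia.
have mc : m + k.+1 != m + k.+2 by apply/eqP; lia.
have dir_k1 y : dir k k.+1 y = k.+1 by apply: dir_low; lia.
have flip_top : coord (flipc (m + k.+2) x) (m + k.+2) = ~~ coord x (m + k.+2).
  by rewrite coord_flipc ?eqxx //; lia.
rewrite /square_dirs !dir_top eqxx andTb.
case xc: (coord x (m + k.+2)).
- have fx : coord (flipc (m + k.+2) x) (m + k.+2) = false by rewrite flip_top xc.
  by rewrite (dirS_on _ xc) // (dirS_off _ fx) // dir_k1 dir_top transpL mc eqxx.
- have fx : coord (flipc (m + k.+2) x) (m + k.+2) by rewrite flip_top xc.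
  by rewrite (dirS_off _ xc) // (dirS_on _ fx) // dir_k1 dir_top transpR kc eqxx.
Qed.

Lemma conj_square_dirs k j x : k <= m -> 1 <= j <= k ->
  square_dirs k j (m + j.+1) (m + j) x.
Proof.
elim: k x => [|k IH] x k_m j_k; first lia.
case: (ltnP j k.+1) => j_lt.
  by apply: square_dirsS; try lia; move=> y; apply: IH; lia.
have -> : j = k.+1 by lia.
exact: conj_square_dirs_top.
Qed.

End Directions.

Section Cover.
Variable m : nat.
Local Notation n := (2 * m).+1.

Definition gdir (x : Hpt m) (g : 'I_n) : nat := dir m g.+1 x.

Definition hlabel (e : Kedge m) : nat * bool := (gdir e.1 e.2, coord e.1 (gdir e.1 e.2)).

Lemma gen_range (g : 'I_n) : 1 <= g.+1 <= m + m.+1.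
Proof. have := ltn_ord g; lia. Qed.

Lemma pi_flipc (g : 'I_n) x : Defs.pi g x = flipc (gdir x g) x.
Proof. exact: actk_dir (gen_range g). Qed.

Lemma gdir_range x (g : 'I_n) : 1 <= gdir x g <= n.
Proof. by have := dir_range x (leqnn m) (gen_range g); rewrite /gdir; lia. Qed.

Lemma gdir_inj x : injective (gdir x).
Proof.
move=> g h /(dir_inj (leqnn m) (gen_range g) (gen_range h)) [gh].
exact: val_inj.
Qed.

Lemma Kletters_square_dirs t (r : 'I_m) x :
  square_dirs (m := m) m
    (Kletters t r).1.1.+1 (Kletters t r).1.2.+1 (Kletters t r).2.+1 x.
Proof.
have r_m := ltn_ord r.
have gen_val j : 1 <= j <= n -> (gen m j : nat).+1 = j.
  by move=> j_n; rewrite /gen inordK; lia.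
case: t => /=; rewrite !gen_val; try lia.
- by apply: conj_square_dirs; lia.
- by apply: comm_square_dirs; lia.
Qed.

Lemma Kside_hlabel (s : Ksq m) : exists A B : nat, A != B /\ forall k : 'I_4,
  hlabel (Kside s k) = if odd k then (B, coord s.1.1 B) else (A, coord s.1.1 A).
Proof.
case: s => [[x t] r] /=.
have := Kletters_square_dirs t r x; rewrite /Kside.
case: (Kletters t r) => [[a b] d] /= /and3P [AB /eqP sqB /eqP sqD].
exists (gdir x a), (gdir x b); split=> //.
have a_n := gdir_range x a; have b_n := gdir_range x b.
case=> [[|[|[|[|k]]]] k4] //=; rewrite /hlabel /= ?pi_flipc /gdir.
- by rewrite sqB coord_flipc_neq // eq_sym.
- by rewrite sqD coord_flipc_neq.
Qed.

Lemma odd_opp4 (k : 'I_4) : odd (opp4 k) = odd k.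
Proof. by rewrite /opp4 inordK; [case: k => [[|[|[|[|k]]]] ?] | rewrite ltn_pmod]. Qed.

Lemma sfwd_Khat_opp4 (s : sqr (Khat m)) (k : 'I_4) : sfwd s (opp4 k) = ~~ sfwd s k.
Proof.
change ((opp4 k : nat) < 2 = ~~ ((k : nat) < 2)).
by rewrite /opp4 inordK ?ltn_pmod //; case: k => [[|[|[|[|k]]]] ?].
Qed.

Lemma hadj_hlabel (e e' : edg (Khat m)) : hadj e e' -> hlabel e = hlabel e'.
Proof.
move/existsP => [s /existsP [k /andP [/eqP <- /eqP <-]]] /=.
by have [A [B [_ lab]]] := Kside_hlabel s; rewrite !lab odd_opp4.
Qed.

Lemma hlabel_side01 (s : sqr (Khat m)) :
  hlabel (side s (inord 0)) != hlabel (side s (inord 1)).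
Proof.
have [A [B [AB lab]]] := Kside_hlabel s.
by rewrite !lab !inordK //; apply: contra AB => /eqP [->].
Qed.

(* Equal labels at a common vertex force a common source, and then [gdir_inj]
   applies. *)
Lemma hlabel_local_inj (e1 e2 : edg (Khat m)) :
  share_vertex e1 e2 -> hlabel e1 = hlabel e2 -> e1 = e2.
Proof.
case: e1 e2 => [x g] [y h]; rewrite /share_vertex /= /Ktgt /= !pi_flipc.
rewrite /hlabel /= => share [gh xy]; rewrite -gh in xy share.
suff eq_xy : x = y by move: gh; rewrite eq_xy => /gdir_inj ->.
have d_n := gdir_range x g; move: (gdir x g) d_n xy share => d d_n xy.
case/or4P => /eqP E //.
- by move: xy; rewrite E coord_flipc // eqxx; case: (coord y _).
- by move: xy; rewrite -E coord_flipc // eqxx; case: (coord x _).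
- by rewrite -(flipcK d x) E flipcK.
Qed.

End Cover.

Theorem proposition6p4 (m : nat) (hm : 1 <= m) :
  (forall e : edg (Khat m), ~ self_intersects e) /\
  (forall e : edg (Khat m), ~ self_osculates e) /\
  (forall e : edg (Khat m), two_sided e).
Proof.
split; [|split] => e.
- exact: (not_self_intersects_of_label (@hadj_hlabel m) (@hlabel_side01 m)).
- exact: (not_self_osculates_of_label (@hadj_hlabel m) (@hlabel_local_inj m)).
- apply: (two_sided_of_invariant (o := fun e : edg (Khat m) => (hlabel e).2)).
    exact: sfwd_Khat_opp4.
  by move=> e1 e2 /hadj_hlabel ->.
Qed.
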